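(* For all integers $s,t$ with $0\leq s\leq t$ and $t\geq 1$, the complete bipartite graph $K_{s,t}$ (where $K_{0,t}=\overline{K_t}$) satisfies $\operatorname{th}_{\operatorname{H}}(K_{s,t})=\lceil 2\sqrt{t}+s-1\rceil$. Since $\kappa(K_{s,t})=s$ and $|V(K_{s,t})|=s+t$, this shows the bound $\operatorname{th}_{\operatorname{H}}(G)\geq\lceil 2\sqrt{n-\kappa}+\kappa-1\rceil$ (for $G$ of order $n$ and vertex connectivity $\kappa$) is attained for every $\kappa\geq 0$.
   Context: All graphs are finite, simple and undirected; $\kappa$ denotes vertex connectivity. Hopping color change rule: a blue vertex $v$ may force a white vertex $w$ to become blue if $v$ has not previously performed a force and every neighbor of $v$ is blue. For an initial blue set $B$, a chronological list of forces of $B$ is a sequence of such forces applied one at a time until no further force is possible; its underlying unordered set is a set of forces of $B$. $B$ is a hopping forcing set if some chronological list of forces of $B$ turns all vertices blue. For a set of forces $\mathcal F$ of $B$, let $\mathcal F^{(0)}=B$ and for $t\geq1$ let $\mathcal F^{(t)}$ be the set of vertices $w\notin U_{t-1}:=\bigcup_{i=0}^{t-1}\mathcal F^{(i)}$ for which there is $(v\to w)\in\mathcal F$ with $v\in U_{t-1}$ and all neighbors of $v$ in $U_{t-1}$. $\operatorname{pt}_{\operatorname{H}}(G;\mathcal F)$ is the least $t$ with $\bigcup_{i=0}^t\mathcal F^{(i)}=V(G)$ ($\infty$ if none); $\operatorname{pt}_{\operatorname{H}}(G;B)$ is the minimum of $\operatorname{pt}_{\operatorname{H}}(G;\mathcal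 F)$ over sets of forces $\mathcal F$ of $B$ ($\infty$ if $B$ is not a hopping forcing set). $\operatorname{th}_{\operatorname{H}}(G)=\min_{B\subseteq V(G)}\big(|B|+\operatorname{pt}_{\operatorname{H}}(G;B)\big)$. *)

From mathcomp Require Import all_boot all_order all_algebra.
From mathcomp Require Import Rstruct.

Set Implicit Arguments. Unset Strict Implicit. Unset Printing Implicit Defensive.
Import Order.TTheory GRing.Theory Num.Theory.

(* A finite simple graph: vertex type T (finType) with adjacency relation e,
   assumed symmetric and irreflexive where needed. *)
Section Hopping.
Variables (T : finType) (e : rel T).

(* v may force w (hopping rule) given the current blue set and the set of
   vertices that have already performed a force. *)
Definition can_hop (blue used : {set T}) (v w : T) : Prop :=
  [/\ v \in blue, v \notin used, w \notin blue & forall u, e v u -> u \in blue].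

Fixpoint chron_from (blue used : {set T}) (l : seq (T * T)) : Prop :=
  match l with
  | [::] => ~ (exists v w, can_hop blue used v w)
  | (v, w) :: l' => can_hop blue used v w /\ chron_from (w |: blue) (v |: used) l'
  end.

Definition chron_list (B : {set T}) (l : seq (T * T)) : Prop := chron_from B set0 l.

Definition set_of_forces (B : {set T}) (F : {set T * T}) : Prop :=
  exists l, chron_list B l /\ F = [set x | x \in l].

Definition hopping_forcing_set (B : {set T}) : Prop :=
  exists l, chron_list B l /\ B :|: [set x.2 | x in [set y | y \in l]] = setT.

Fixpoint Uset (B : {set T}) (F : {set T * T}) (t : nat) : {set T} :=
  match t with
  | 0 => B
  | t'.+1 =>
      let U := Uset B F t' in
      U :|: [set w | (w \notin U) &&
               [exists v, ((v, w) \in F) && (v \in U) &&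
                          [forall u, e v u ==> (u \in U)]]]
  end.

Definition ptF_is (B : {set T}) (F : {set T * T}) (k : nat) : Prop :=
  Uset B F k = setT /\ forall j, j < k -> Uset B F j != setT.

Definition ptB_is (B : {set T}) (k : nat) : Prop :=
  hopping_forcing_set B /\
  (exists F, set_of_forces B F /\ ptF_is B F k) /\
  (forall F j, set_of_forces B F -> ptF_is B F j -> k <= j).

Definition thH_is (m : nat) : Prop :=
  (exists B k, ptB_is B k /\ #|B| + k = m) /\
  (forall B k, ptB_is B k -> m <= #|B| + k).

End Hopping.

Definition Kst_rel (s t : nat) : rel ('I_s + 'I_t)%type :=
  fun x y => match x, y with
             | inl _, inr _ | inr _, inl _ => true
             | _, _ => false
             end.
Arguments Kst_rel : clear implicits.

(* A hopping forcing set B of K_{s,t} must contain a whole side, otherwise every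
   vertex keeps a white neighbour and nothing is ever forced.  If B contains the
   left side, each right vertex outside B that is blue after round r + 1 has its
   own forcer, a right vertex blue after round r; so with b := |B ∩ right| the
   numbers n_r of blue right vertices satisfy n_(r+1) <= b + n_r, hence
   t <= b (pt + 1) and, by AM-GM, |B| + pt = s + b + pt >= s + 2 sqrt t - 1.
   The other case gives t + 2 sqrt s - 1, which is no smaller because
   x - 2 sqrt x is nondecreasing for x >= 1.  Conversely, with b + p = ceil (2 sqrt t)
   and b p >= t, the left side plus b right vertices forces the right side in
   blocks of b (right vertex i forces i + b) within p - 1 rounds. *)

From mathcomp Require Import all_boot all_order all_algebra.
From mathcomp Require Import Rstruct.
From mathcomp Require Import zify lra.

Set Implicit Arguments. Unset Strict Implicit. Unset Printing Implicit Defensive.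
Import Order.TTheory GRing.Theory Num.Theory.

Section HoppingForcing.
Variables (T : finType) (e : rel T).
Implicit Types (B X U : {set T}) (F : {set T * T}) (l : seq (T * T)).

Definition saturated U : {set T} := [set v in U | [forall u, e v u ==> (u \in U)]].

Lemma UsetS_sub B F r : Uset e B F r \subset Uset e B F r.+1.
Proof. exact: subsetUl. Qed.

Lemma Uset_sub B F r r' : r <= r' -> Uset e B F r \subset Uset e B F r'.
Proof.
move=> /subnKC <-; elim: (r' - r) => [|d IH]; first by rewrite addn0.
by rewrite addnS (subset_trans IH) // UsetS_sub.
Qed.

Lemma sub_Uset B F r : B \subset Uset e B F r.
Proof. exact: (@Uset_sub B F 0 r). Qed.

Lemma UsetSP B F r w : w \in Uset e B F r.+1 -> w \notin B ->
  exists2 v, (v, w) \in F & v \in saturated (Uset e B F r).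
Proof.
elim: r w => [|r IH] w; rewrite [Uset _ _ _ _.+1]/= inE => /orP [wU wB|].
2,4: rewrite inE => /andP [_ /existsP [v /andP [/andP [vwF vU] vN]]] _;
  by exists v; rewrite // inE vU.
- by rewrite wU in wB.
- have [v vwF] := IH w wU wB; rewrite !inE => /andP [vU /forallP vN].
  exists v; rewrite // inE (subsetP (UsetS_sub _ _ _)) //=.
  by apply/forallP => u; apply/implyP => /(implyP (vN u)) /(subsetP (UsetS_sub _ _ _)).
Qed.

Lemma Uset_sub_targets B F r : Uset e B F r \subset B :|: [set p.2 | p in F].
Proof.
case: r => [|r]; first exact: subsetUl.
apply/subsetP => w wU; rewrite inE; case: (boolP (w \in B)) => //= wB.
by have [v vwF _] := UsetSP wU wB; apply/imsetP; exists (v, w).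
Qed.

Lemma Uset_stuck B F : saturated B = set0 -> forall r, Uset e B F r = B.
Proof.
move=> satB; elim => [//|r /= ->]; apply/setUidPl/subsetP => w.
rewrite inE => /andP [_ /existsP [v /andP [/andP [_ vB] vN]]].
by have := in_set0 v; rewrite -satB inE vB vN.
Qed.

Lemma chron_from_fresh blue used l :
  chron_from e blue used l -> {in l, forall p, p.1 \notin used}.
Proof.
elim: l blue used => [|[v w] l IH] blue used //= [[_ vU _ _] /IH fresh] p.
by rewrite inE => /orP [/eqP -> //|/fresh]; rewrite inE negb_or => /andP [].
Qed.

Lemma chron_from_fst_inj blue used l :
  chron_from e blue used l -> {in l &, injective (@fst T T)}.
Proof.
elim: l blue used => [|[v w] l IH] blue used //= [_ hl] p q.
have fresh := chron_from_fresh hl; have inj := IH _ _ hl.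
rewrite !inE => /orP [/eqP ->|pl] /orP [/eqP ->|ql] //= pq.
- by have := fresh q ql; rewrite -pq setU11.
- by have := fresh p pl; rewrite pq setU11.
- exact: inj.
Qed.

Definition functional F := forall v w w', (v, w) \in F -> (v, w') \in F -> w = w'.

Lemma forces_functional B F : set_of_forces e B F -> functional F.
Proof.
move=> [l [/chron_from_fst_inj inj ->]] v w w'; rewrite !inE => vw vw'.
by have [] := inj _ _ vw vw' erefl.
Qed.

Lemma card_UsetS_new B F r : functional F ->
  #|Uset e B F r.+1 :\: B| <= #|saturated (Uset e B F r)|.
Proof.
move=> Ffun; set S := [set p in F | p.1 \in saturated (Uset e B F r)].
have new_sub : Uset e B F r.+1 :\: B \subset [set p.2 | p in S].
  apply/subsetP => w; rewrite inE => /andP [wB wU].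
  by have [v vwF vsat] := UsetSP wU wB; apply/imsetP; exists (v, w); rewrite // inE vwF.
have fst_inj : {in S &, injective (@fst T T)}.
  move=> [v w] [v' w']; rewrite !inE /= => /andP [vw _] /andP [vw' _] vv'.
  by rewrite -vv' in vw' *; rewrite (Ffun _ _ _ vw vw').
apply: leq_trans (subset_leq_card new_sub) _; apply: leq_trans (leq_imset_card _ _) _.
rewrite -(card_in_imset fst_inj); apply/subset_leq_card/subsetP => v.
by case/imsetP => p; rewrite inE => /andP [_ ?] ->.
Qed.

Lemma card_Uset_le B F X k : functional F ->
  (forall r, r < k -> saturated (Uset e B F r) \subset X) ->
  forall r, r <= k -> #|Uset e B F r :&: X| <= #|B :&: X| * r.+1.
Proof.
move=> Ffun satX; elim => [|r IH] rk; first by rewrite muln1.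
set U := Uset e B F r.+1; set U0 := Uset e B F r.
have split_new : #|U :&: X| <= #|B :&: X| + #|U :\: B|.
  apply: leq_trans (leq_card_setU _ _).1.
  apply/subset_leq_card/subsetP => x; rewrite !inE => /andP [xU ->].
  by rewrite xU andbT; case: (x \in B).
have sat_sub : saturated U0 \subset U0 :&: X.
  by rewrite subsetI satX // andbT; apply/subsetP => v; rewrite inE => /andP [].
have := card_UsetS_new B r Ffun; rewrite -/U -/U0.
have := subset_leq_card sat_sub; have := IH (ltnW rk); rewrite -/U0 !mulnS; lia.
Qed.

Lemma ptF_exists B F j : Uset e B F j = setT -> exists2 k, k <= j & ptF_is e B F k.
Proof.
move=> Uj; have ex : exists n, Uset e B F n == setT by exists j; apply/eqP.
case: (ex_minnP ex) => k /eqP Uk kmin; exists k; first by rewrite kmin ?Uj.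
by split => // i ik; apply/negP => /kmin; rewrite leqNgt ik.
Qed.

Lemma ptB_is_min B F k : set_of_forces e B F -> Uset e B F k = setT ->
  (forall F' j, set_of_forces e B F' -> ptF_is e B F' j -> k <= j) ->
  ptB_is e B k.
Proof.
move=> BF Uk kmin; split; last split=> //.
- case: (BF) => l [hl Fl]; exists l; split=> //; apply/eqP; rewrite eqEsubset subsetT /=.
  by rewrite -Fl -Uk Uset_sub_targets.
- have [j jk ptj] := ptF_exists Uk; have kj := kmin _ _ BF ptj.
  have -> : k = j by apply/eqP; rewrite eqn_leq jk kj.
  by exists F.
Qed.

Lemma card_le_ptF B F X k : set_of_forces e B F -> ptF_is e B F k ->
  ~: X \subset B -> (forall v x, v \notin X -> x \in X -> e v x) ->
  #|X| <= #|B :&: X| * k.+1.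
Proof.
move=> /forces_functional Ffun [Uk kmin] XB Xcomplete.
rewrite -{1}(setTI X) -Uk; apply: (card_Uset_le Ffun _ (leqnn k)) => r rk.
apply/subsetP => v; rewrite inE => /andP [_ /forallP vN]; apply/negPn/negP => vX.
have /negP[] := kmin r rk; rewrite eqEsubset subsetT -(setUCr X) subUset /=.
apply/andP; split; last exact: subset_trans XB (sub_Uset B F r).
by apply/subsetP => x xX; apply: (implyP (vN x)); apply: Xcomplete.
Qed.

End HoppingForcing.

Lemma sq_least_le c d n : c.-1 ^ 2 < n -> n <= d ^ 2 -> c <= d.
Proof.
move=> cn nd; rewrite leqNgt; apply/negP => dc.
by have := leq_trans cn nd; rewrite ltnNge leq_sqr -ltnS (ltn_predK dc) dc.
Qed.

Lemma agm_bound n b k : n <= b * k -> 4 * n <= (b + k) ^ 2.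
Proof. by move=> nbk; rewrite (leq_trans _ (nat_AGM2 b k).1) // leq_mul2l. Qed.

Lemma sq_shift_bound m e s : 0 < s -> 4 * s <= e ^ 2 -> 4 * (m + s) <= (m + e) ^ 2.
Proof.
move=> s0 se; have e2 : 2 <= e by rewrite -(leq_sqr 2); apply: leq_trans se; lia.
nia.
Qed.

Lemma split_sq_ceil c t : 0 < t -> c.-1 ^ 2 < 4 * t <= c ^ 2 ->
  exists b p, [/\ 0 < b, b <= t, t <= b * p & b + p = c].
Proof.
move=> t_gt0 /andP [ct tc]; exists (uphalf c), c./2.
have := odd_double_half c; rewrite uphalf_half -muln2.
case: (odd c) => /= c_eq; rewrite -c_eq in ct tc *; split; nia.
Qed.

Section CompleteBipartite.
Variables s t : nat.
Local Notation V := ('I_s + 'I_t)%type.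
Local Notation K := (Kst_rel s t).
Implicit Types (B : {set V}) (F : {set V * V}).

Definition Kst_left : {set V} := [set x | if x is inl _ then true else false].
Definition Kst_right : {set V} := [set x | if x is inr _ then true else false].

Lemma setC_Kst_left : ~: Kst_left = Kst_right.
Proof. by apply/setP => -[i|i]; rewrite !inE. Qed.

Lemma setC_Kst_right : ~: Kst_right = Kst_left.
Proof. by rewrite -setC_Kst_left setCK. Qed.

Lemma Kst_leftE : Kst_left = inl @: [set: 'I_s].
Proof.
apply/setP => -[i|i]; rewrite !inE; apply/esym/imsetP; first by exists i.
by case=> ? _.
Qed.

Lemma Kst_rightE : Kst_right = inr @: [set: 'I_t].
Proof.
apply/setP => -[i|i]; rewrite !inE; apply/esym/imsetP; last by exists i.
by case=> ? _.
Qed.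

Lemma card_Kst_left : #|Kst_left| = s.
Proof. by rewrite Kst_leftE card_imset ?cardsT ?card_ord // => i j []. Qed.

Lemma card_Kst_right : #|Kst_right| = t.
Proof. by rewrite Kst_rightE card_imset ?cardsT ?card_ord // => i j []. Qed.

Lemma card_Kst_sides B : #|B| = #|B :&: Kst_left| + #|B :&: Kst_right|.
Proof. by rewrite -(cardsID Kst_left B) setDE setC_Kst_left. Qed.

Lemma Kst_blue_side B F k : ptF_is K B F k -> Kst_left \subset B \/ Kst_right \subset B.
Proof.
move=> [Uk _]; case: (boolP (Kst_left \subset B)) => [|/subsetPn [[i|i] + iB]];
  [by left | rewrite inE => _ | by rewrite inE].
case: (boolP (Kst_right \subset B)) => [|/subsetPn [[j|j] + jB]];
  [by right | by rewrite inE | rewrite inE => _].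
have satB : saturated K B = set0.
  apply/setP => -[v|v]; rewrite !inE; apply/negbTE; rewrite negb_and; apply/orP; right.
    by apply/forallP => /(_ (inr j)); rewrite /= (negbTE jB).
  by apply/forallP => /(_ (inl i)); rewrite /= (negbTE iB).
by move: iB; rewrite -(Uset_stuck F satB k) Uk inE.
Qed.

Lemma Kst_ptF_right B F k : set_of_forces K B F -> ptF_is K B F k ->
  Kst_left \subset B -> t <= #|B :&: Kst_right| * k.+1.
Proof.
move=> BF ptF; rewrite -setC_Kst_right -[X in X <= _]card_Kst_right => XB.
by apply: card_le_ptF BF ptF XB _ => -[v|v] [x|x]; rewrite !inE.
Qed.

Lemma Kst_ptF_left B F k : set_of_forces K B F -> ptF_is K B F k ->
  Kst_right \subset B -> s <= #|B :&: Kst_left| * k.+1.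
Proof.
move=> BF ptF; rewrite -setC_Kst_left -[X in X <= _]card_Kst_left => XB.
by apply: card_le_ptF BF ptF XB _ => -[v|v] [x|x]; rewrite !inE.
Qed.

Lemma Kst_ptB_lower c B k : s <= t -> c.-1 ^ 2 < 4 * t ->
  ptB_is K B k -> s + c <= #|B| + k.+1.
Proof.
move=> st ct [_ [[F [BF ptF]] _]]; rewrite card_Kst_sides.
case: (boolP (Kst_left \subset B)) => [leftB|leftNB].
  have := Kst_ptF_right BF ptF leftB; rewrite (setIidPr leftB) card_Kst_left.
  by move=> /agm_bound /(sq_least_le ct); lia.
have s_gt0 : 0 < s.
  by rewrite -card_Kst_left; apply/card_gt0P; case/subsetPn: leftNB => v; exists v.
have [/(negP leftNB) []|rightB] := Kst_blue_side ptF.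
have := Kst_ptF_left BF ptF rightB; rewrite (setIidPr rightB) card_Kst_right.
move=> /agm_bound /(@sq_shift_bound (t - s) _ _ s_gt0); rewrite subnK //.
by move=> /(sq_least_le ct); lia.
Qed.

End CompleteBipartite.

Section PrefixForcing.
Variables (s t' b : nat).
Hypotheses (b_gt0 : 0 < b) (b_le : b <= t'.+1).
Local Notation t := t'.+1.
Local Notation V := ('I_s + 'I_t)%type.
Local Notation K := (Kst_rel s t).

Definition rprefix n : {set V} := [set x : V | if x is inr i then i < n else false].

Definition Kst_prefix : {set V} := Kst_left s t :|: rprefix b.

Definition shift_forces n m : seq (V * V) :=
  [seq (inr (inord i), inr (inord (i + b))) | i <- iota n m].

Definition shift_set : {set V * V} := [set p | p \in shift_forces 0 (t - b)].

Lemma rprefixS n : n < t -> inr (inord n) |: rprefix n = rprefix n.+1.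
Proof.
move=> nt; apply/setP => -[x|x]; rewrite !inE //.
by rewrite -[inr x == _]/(x == inord n) -val_eqE /= inordK // -leq_eqVlt.
Qed.

Lemma card_rprefix n : n <= t -> #|rprefix n| = n.
Proof.
elim: n => [|n IH] nt.
  by apply/eqP; rewrite cards_eq0; apply/eqP/setP => -[x|x]; rewrite !inE.
by rewrite -rprefixS // cardsU1 IH 1?ltnW // inE inordK ?ltnn.
Qed.

Lemma chron_shift_forces n m : n + m = t - b ->
  chron_from K (Kst_left s t :|: rprefix (n + b)) (rprefix n) (shift_forces n m).
Proof.
elim: m n => [|m IH] n nm /=.
  move=> [v [[w|w] [_ _]]]; rewrite !inE // => wB _.
  by move: wB; rewrite negb_or -leqNgt; have := ltn_ord w; lia.
have nt : n < t by lia.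
have nbt : n + b < t by lia.
split.
  split; rewrite ?inE ?inordK //=.
  - by rewrite -{1}[n]addn0 ltn_add2l.
  - by rewrite ltnn.
  - by rewrite ltnn.
  - by move=> [u|u] //= _; rewrite !inE.
rewrite setUCA (rprefixS nbt) (rprefixS nt) -addSn.
by apply: IH; rewrite addSnnS.
Qed.

Lemma set_of_forces_shift : set_of_forces K Kst_prefix shift_set.
Proof.
exists (shift_forces 0 (t - b)); split=> //; rewrite /chron_list.
have -> : set0 = rprefix 0 by apply/setP => -[x|x]; rewrite !inE.
exact: chron_shift_forces.
Qed.

Lemma shift_set_mem i : i + b < t -> (inr (inord i), inr (inord (i + b))) \in shift_set.
Proof.
by move=> ibt; rewrite inE; apply/mapP; exists i; rewrite // mem_iota ltn_subRL addnC.
Qed.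

Lemma Kst_prefix_right : Kst_prefix :&: Kst_right s t = rprefix b.
Proof. by apply/setP => -[x|x]; rewrite !inE ?andbT. Qed.

Lemma card_Kst_prefix : #|Kst_prefix| = s + b.
Proof.
rewrite card_Kst_sides Kst_prefix_right card_rprefix // (setIidPr _) ?card_Kst_left //.
exact: subsetUl.
Qed.

Lemma Uset_shift r (j : 'I_t) : j < b * r.+1 -> inr j \in Uset K Kst_prefix shift_set r.
Proof.
elim: r j => [|r IH] j jb; first by rewrite !inE -[b]muln1 jb orbT.
rewrite /= inE; case: (boolP (inr j \in _)) => //= jU; rewrite inE jU /=.
have bj : b <= j.
  by apply: leq_trans (leq_pmulr b (ltn0Sn r)) _; rewrite leqNgt; exact: contra (IH j) jU.
have jbt : j - b + b < t by rewrite subnK.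
apply/existsP; exists (inr (inord (j - b))); apply/andP; split; [apply/andP; split|].
- by have := shift_set_mem jbt; rewrite subnK // inord_val.
- apply: IH; rewrite inordK ?ltn_subLR // -?mulnS //.
  exact: leq_trans (ltn_ord j) (leq_addl b t).
- apply/forallP => -[u|u] //=; apply: (subsetP (sub_Uset _ _ _ _)).
  by rewrite !inE.
Qed.

Lemma ptB_Kst_prefix : ptB_is K Kst_prefix (t' %/ b).
Proof.
apply: (ptB_is_min set_of_forces_shift).
  apply/setP => -[x|x]; rewrite inE.
    by apply: (subsetP (sub_Uset _ _ _ _)); rewrite !inE.
  by apply: Uset_shift; rewrite mulnC -ltn_divLR // ltnS leq_div2r // -ltnS.
move=> F j BF ptF; have := Kst_ptF_right BF ptF (subsetUl _ _).
by rewrite Kst_prefix_right card_rprefix // mulnC -ltn_divLR.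
Qed.
End PrefixForcing.

Local Open Scope ring_scope.
Local Notation R := Rdefinitions.R.

Lemma ceil_two_sqrt (s t : nat) : (0 < t)%N ->
  exists2 c : nat,
    (`|Num.ceil (2 * Num.sqrt (t%:R : R) + s%:R - 1)|%N).+1 = (s + c)%N
    & (c.-1 ^ 2 < 4 * t <= c ^ 2)%N.
Proof.
move=> t_gt0; set x : R := 2 * Num.sqrt t%:R + s%:R - 1.
set m := `|Num.ceil x|%N.
have sqrt_ge1 : 1 <= Num.sqrt (t%:R : R) by rewrite -{1}sqrtr1 ler_sqrt ?ler0n // ler1n.
have sqrt_sq : Num.sqrt (t%:R : R) ^+ 2 = t%:R by rewrite sqr_sqrtr ?ler0n.
have s_ge0 : (0 : R) <= s%:R by rewrite ler0n.
have m_real : (m%:R : R) = (Num.ceil x)%:~R.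
  by rewrite natr_absz ger0_norm // ceil_ge0 /x; lra.
have [x_le_m m_lt_x] : x <= m%:R /\ m%:R - 1 < x.
  by rewrite m_real; have := ceilB1_lt x; rewrite intrD; split; [exact: ceil_ge | lra].
rewrite /x in x_le_m m_lt_x.
have s_lt_m : (s < m)%N by rewrite -(ltr_nat R); lra.
exists (m.+1 - s)%N; first by lia.
have c_real : ((m.+1 - s)%N%:R : R) = m%:R + 1 - s%:R.
  by rewrite natrB -?natr1 //; lia.
have c1_real : ((m.+1 - s).-1%N%:R : R) = m%:R - s%:R.
  by rewrite subSn ?succnK ?natrB // ltnW.
set y := Num.sqrt (t%:R : R) in sqrt_ge1 sqrt_sq x_le_m m_lt_x *.
apply/andP; split.
- rewrite -(ltr_nat R) natrX natrM c1_real.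
  have : 0 < (2 * y - (m%:R - s%:R)) * (2 * y + (m%:R - s%:R)).
    by apply: mulr_gt0; lra.
  nra.
- rewrite -(ler_nat R) natrX natrM c_real.
  have : 0 <= (m%:R + 1 - s%:R - 2 * y) * (m%:R + 1 - s%:R + 2 * y).
    by apply: mulr_ge0; lra.
  nra.
Qed.

Theorem proposition3p7 (s t : nat) (hst : (s <= t)%N) (ht : (1 <= t)%N) :
  thH_is (Kst_rel s t)
    `|Num.ceil (2 * Num.sqrt (t%:R : Rdefinitions.R) + s%:R - 1)|%N.
Proof.
case: t hst ht => [//|t'] hst ht.
have [c] := ceil_two_sqrt s ht.
set m := `|Num.ceil _|%N => m_eq ct.
have lower B k : ptB_is (Kst_rel s t'.+1) B k -> (m <= #|B| + k)%N.
  by move=> /(Kst_ptB_lower hst (proj1 (andP ct))); rewrite -m_eq addnS ltnS.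
have [b [p [b_gt0 b_le tp cE]]] := split_sq_ceil ht ct.
have pt_prefix := ptB_Kst_prefix s b_gt0 b_le.
split=> //; exists (Kst_prefix s t' b), (t' %/ b)%N; split=> //.
apply/eqP; rewrite eqn_leq lower // andbT card_Kst_prefix //.
have : (t' %/ b < p)%N by rewrite ltn_divLR // mulnC.
by move=> kp; rewrite -ltnS m_eq -cE addnA ltn_add2l.
Qed.
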